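(* Let $G_M$ be a maximal reducible graph, let $T_M$ be a persistent phylogeny solving $G_M$, and let $c,c'$ be overlapping characters occurring in $T_M$ and inactive in $G_M$. Then one of the following holds: (1) $T_M$ contains (in this order along a root-to-leaf path) the edges $c^+$, $c'^+$, $c^-$, $c'^-$, where $c'^-$ may be missing; (2) $T_M$ contains (in this order along a root-to-leaf path) the edges $c'^+$, $c^+$, $c'^-$, $c^-$, where $c^-$ may be missing; (3) $c^-$ and $c'^-$ appear in two distinct paths of $T_M$, and, if $c$ and $c'$ are conflicting in $G_M$, $T_M$ has a species preceding both $c^+$ and $c'^+$.
   Context: Persistent phylogeny. Let $M$ be a binary matrix with rows indexed by species $S$ and columns by characters $C=\{c_1,\dots,c_m\}$, and $A\subseteq C$ (active characters). A persistent phylogeny for $(M,A)$ is a rooted tree $T$ whose nodes $x$ carry vectors $l_x\in\{0,1\}^m$ (the state of $x$) such that: the root $r$ has $l_r[j]=1$ iff $c_j\in A$; each edge is labelled $c_j^+$ for each character changing from 0 to 1 on it and $c_j^-$ for each changing from 1 to 0; each character changes state on at most two edges, and if on two, they lie on one root-to-leaf path with the gain $c_j^+$ closer to the root than the loss $c_j^-$; each row of $M$ equals $l_x$ for some node $x$ (called a species of $T$). Edges are identified with their labels. Red-black graphs. A red-black graph on species $S$ and characters $C$ is a bipartite graph on $S\cup C$ with red or black edges, each character incident only to black edges (inactive) or only to red edges (active). Its associated matrix has $M[s,c]=1$ iff $(s,c)$ is black, or $c$ is active and $(s,c)$ is not an edge; a tree solving the graph is a persistent phylogeny for (associated matrix,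 set of active characters). $S(c)=\{s:M[s,c]=1\}$. Two characters $c,c'$ overlap if $S(c)\cap S(c')\neq\emptyset$ and neither of $S(c),S(c')$ contains the other; they are conflicting if the pairs $(M[s,c],M[s,c'])$, $s\in S$, take all four values $(0,0),(0,1),(1,0),(1,1)$. Realizing $c^+$ ($c$ inactive): with $D(c)$ the species of the component of $c$, add red edges from $c$ to $D(c)\setminus N(c)$, delete black edges on $c$ and isolated vertices; realizing $c^-$ ($c$ active, $D(c)\subseteq N(c)$): delete all edges on $c$ and isolated vertices. An active character red-adjacent to all species is free. A c-reduction $\langle c_1^+,\dots,c_k^+\rangle$ is successful if realizing the characters in order is always defined (realizing negatively each character right after it becomes free) and yields the empty graph. A red-black graph is reducible if it is connected and admits a successful reduction (i.e. is solved by some persistent phylogeny). Standing assumption: no free, null (isolated) or universal (inactive and black-adjacent to all species) characters, no species with no characters, no two identical character columns. An inactive character $c$ is maximal if no inactive $c'$ has $S(c)\subsetneq S(c')$. A maximal reducible graph is a reducible red-black graph all of whose characters are inactive and maximal. *)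

From mathcomp Require Import all_boot.
Set Implicit Arguments. Unset Strict Implicit. Unset Printing Implicit Defensive.

(* [rb_edge s c] : (s,c) is an edge; [rb_active c] : c is active      *)
(* (all its edges are red), otherwise inactive (all edges black).     *)
Record rbgraph (S C : finType) := RBGraph {
  rb_edge : S -> C -> bool;
  rb_active : C -> bool }.

Section RB.
Variables (S C : finType) (G : rbgraph S C).

Definition assoc_matrix (s : S) (c : C) : bool :=
  if rb_active G c then ~~ rb_edge G s c else rb_edge G s c.

Definition active_set : {set C} := [set c | rb_active G c].

Definition Sof (c : C) : {set S} := [set s | assoc_matrix s c].

Definition overlapping (c c' : C) : Prop :=
  Sof c :&: Sof c' != set0 /\ ~~ (Sof c \subset Sof c') /\ ~~ (Sof c' \subset Sof c).

Definition conflicting (c c' : C) : Prop :=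
  forall b b' : bool, exists s : S, assoc_matrix s c = b /\ assoc_matrix s c' = b'.

Definition rb_adj : rel (S + C) := fun u v =>
  match u, v with
  | inl s, inr c => rb_edge G s c
  | inr c, inl s => rb_edge G s c
  | _, _ => false
  end.

Definition rb_connected : Prop := forall u v : S + C, connect rb_adj u v.

Definition standing : Prop :=
  (* no free characters *)
  (forall c, rb_active G c -> exists s, ~~ rb_edge G s c) /\
  (forall c, exists s, rb_edge G s c) /\
  (* no universal characters *)
  (forall c, ~~ rb_active G c -> exists s, ~~ rb_edge G s c) /\
  (forall s, exists c, rb_edge G s c) /\
  (forall c c', (forall s, assoc_matrix s c = assoc_matrix s c') -> c = c').

Definition maximal_char (c : C) : Prop :=
  ~~ rb_active G c /\
  forall c', ~~ rb_active G c' -> ~~ (Sof c \proper Sof c').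

End RB.

(* is identified with its child x.                                    *)
Section Tree.
Variables (V : finType) (r : V) (par : V -> V).

Definition rooted_tree : Prop :=
  par r = r /\ (forall x, x != r -> par x != x) /\
  (forall x, exists n, iter n par x = r).

Definition anc (x y : V) : Prop := exists n, iter n par y = x.
Definition sanc (x y : V) : Prop := y != r /\ anc x (par y).

Variables (C : finType) (l : V -> {ffun C -> bool}).

Definition gain (c : C) (x : V) : bool := (x != r) && ~~ l (par x) c && l x c.
Definition loss (c : C) (x : V) : bool := (x != r) && l (par x) c && ~~ l x c.
Definition changes (c : C) (x : V) : bool := (x != r) && (l (par x) c != l x c).

Definition is_species (S : finType) (M : S -> C -> bool) (x : V) : Prop :=
  exists s, forall c, l x c = M s c.

Definition persistent_phylogeny (S : finType) (M : S -> C -> bool) (A : {set C}) : Prop :=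
  rooted_tree /\
  (forall c, l r c = (c \in A)) /\
  (forall c x y z, changes c x -> changes c y -> changes c z ->
     x = y \/ x = z \/ y = z) /\
  (forall c x y, changes c x -> changes c y -> x != y ->
     (gain c x /\ loss c y /\ sanc x y) \/ (gain c y /\ loss c x /\ sanc y x)) /\
  (forall s, exists x, forall c, l x c = M s c).

Definition occurs (c : C) : Prop := exists x, changes c x.

End Tree.

Definition solves (S C V : finType) (G : rbgraph S C) (r : V) (par : V -> V)
  (l : V -> {ffun C -> bool}) : Prop :=
  persistent_phylogeny r par l (assoc_matrix G) (active_set G).

Definition reducible (S C : finType) (G : rbgraph S C) : Prop :=
  rb_connected G /\
  exists (V : finType) (r : V) (par : V -> V) (l : V -> {ffun C -> bool}),
    solves G r par l.

Definition maximal_reducible (S C : finType) (G : rbgraph S C) : Prop :=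
  reducible G /\ (forall c, ~~ rb_active G c) /\ (forall c, maximal_char G c).

From mathcomp Require Import all_boot.
From Stdlib Require Import Classical.
Set Implicit Arguments. Unset Strict Implicit. Unset Printing Implicit Defensive.

(* All characters are inactive, so the root has state 0 and each character
   is gained once and lost at most once, below its gain; a node carries c iff
   it lies below c^+ and not below c^-.  The species with both c and c' lies
   below both gains, which are thus comparable, say c^+ above c'^+.  A species
   with c' but not c puts c^- strictly below c'^+, and a species with c but
   not c' separates c^+ from c'^+ whenever c'^- is missing or below c^-: this
   is case (1).  Otherwise c^- and c'^- are incomparable, and no node below
   c^+ carries neither character.  If c and c' conflict, the species with
   neither character thus lies outside the subtree of c^+, and connectivity
   gives such an outside species y sharing a character d with a species
   inside.  Maximality forbids any change of state between y and its lowest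
   ancestor above c^+: a gain there would give a character contained in d, a
   loss would give a character containing c.  That ancestor is therefore a
   species preceding both gains. *)

Lemma ex_minn_classic (P : nat -> Prop) :
  (exists n, P n) -> exists n, P n /\ forall m, m < n -> ~ P m.
Proof.
move=> [n Pn]; apply: NNPP => no_min; suff : forall m, ~ P m by move/(_ n).
by elim/ltn_ind=> m IH Pm; apply: no_min; exists m.
Qed.

Lemma connect_crossing (T : finType) (e : rel T) (P : T -> Prop) u v :
  connect e u v -> ~ P u -> P v -> exists x y, [/\ e x y, ~ P x & P y].
Proof.
move/connectP=> [p]; elim: p u => [|w p IH] u /=; first by move=> _ -> Nu /Nu.
move=> /andP[euw wp] vE Nu Pv; have [Pw|Nw] := classic (P w); first by exists u, w.
exact: IH wp vE Nw Pv.
Qed.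

Lemma overlapping_sym (S C : finType) (G : rbgraph S C) c c' :
  overlapping G c c' -> overlapping G c' c.
Proof. by rewrite /overlapping setIC => -[? [? ?]]. Qed.

Section Ancestry.
Variables (V : finType) (r : V) (par : V -> V).
Local Notation anc := (anc par).
Local Notation sanc := (sanc r par).

Lemma anc_refl x : anc x x. Proof. by exists 0. Qed.

Lemma anc_iter n x : anc (iter n par x) x. Proof. by exists n. Qed.

Lemma anc_par x : anc (par x) x. Proof. exact: (anc_iter 1). Qed.

Lemma anc_trans x y z : anc x y -> anc y z -> anc x z.
Proof. by move=> [m <-] [n <-]; exists (m + n); rewrite iterD. Qed.

Lemma anc_iter_leq i j x : i <= j -> anc (iter j par x) (iter i par x).
Proof. by move=> le_ij; exists (j - i); rewrite -iterD subnK. Qed.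

Lemma anc_total x y z : anc x z -> anc y z -> anc x y \/ anc y x.
Proof.
move=> [m <-] [n <-].
by case: (leqP m n) => [/anc_iter_leq|/ltnW/anc_iter_leq]; [right | left].
Qed.

Lemma sanc_anc x y : sanc x y -> anc x y.
Proof. by case=> _ /anc_trans; apply; exact: anc_par. Qed.

Hypothesis tree : rooted_tree r par.

Lemma par_root : par r = r. Proof. by case: tree. Qed.

Lemma iter_par_root n : iter n par r = r.
Proof. by elim: n => //= n ->; exact: par_root. Qed.

Lemma anc_root x : anc r x.
Proof. by case: tree => _ [_ /(_ x)]. Qed.

Lemma iter_par_fixed x n : 0 < n -> iter n par x = x -> x = r.
Proof.
move=> n_gt0 cyc; have [N xN] := anc_root x.
have cycM j : iter (n * j) par x = x.
  by elim: j => [|j IH]; rewrite ?muln0 // mulnS iterD IH cyc.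
have le_N : N <= n * N by rewrite leq_pmull.
by rewrite -(cycM N) -(subnK le_N) iterD xN iter_par_root.
Qed.

Lemma anc_antisym x y : anc x y -> anc y x -> x = y.
Proof.
move=> [n yx] [m xy]; have [|mn_gt0] := posnP (m + n).
  by move/eqP; rewrite addn_eq0 => /andP[_ /eqP n0]; rewrite -yx n0.
have y_root : y = r by apply: iter_par_fixed mn_gt0 _; rewrite iterD yx.
by rewrite -yx y_root iter_par_root.
Qed.

Lemma sancE x y : sanc x y <-> anc x y /\ x <> y.
Proof.
split=> [xy|[[n yx] neq_xy]].
  split; first exact: sanc_anc.
  move=> eq_xy; case: xy => y_nroot; rewrite eq_xy => py_y.
  case: tree => _ [/(_ y y_nroot)/eqP + _]; apply.
  exact: anc_antisym (anc_par y) py_y.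
case: n yx => [|n] yx; first by case: neq_xy.
split; last by exists n; rewrite -iterSr.
by apply: contra_not_neq neq_xy => y_root; rewrite -yx y_root iter_par_root.
Qed.

Lemma anc_sanc x y : anc x y -> ~ anc y x -> sanc x y.
Proof.
move=> xy Nyx; apply/sancE; split=> // eq_xy.
by apply: Nyx; rewrite eq_xy; exact: anc_refl.
Qed.

Lemma sanc_anc_trans x y z : sanc x y -> anc y z -> sanc x z.
Proof.
move=> /sancE[xy neq_xy] yz; apply/sancE; split; first exact: anc_trans yz.
by move=> eq_xz; apply: neq_xy; apply: (anc_antisym xy); rewrite eq_xz.
Qed.

Section Phylogeny.
Variables (C : finType) (l : V -> {ffun C -> bool}).
Local Notation gain := (gain r par l).
Local Notation loss := (loss r par l).
Local Notation changes := (changes r par l).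

Lemma changesE k x : changes k x = gain k x || loss k x.
Proof.
by rewrite /changes /gain /loss; case: (x != r) (l (par x) k) (l x k) => [] [] [].
Qed.

Lemma gainNloss k x : gain k x -> ~~ loss k x.
Proof. by rewrite /gain /loss; case: (x != r) (l (par x) k) (l x k) => [] [] []. Qed.

Lemma changes_gain k x : changes k x -> gain k x = l x k.
Proof. by rewrite /changes /gain; case: (x != r) (l (par x) k) (l x k) => [] [] []. Qed.

Lemma changes_loss k x : changes k x -> loss k x = ~~ l x k.
Proof. by rewrite /changes /loss; case: (x != r) (l (par x) k) (l x k) => [] [] []. Qed.

Lemma state_gain k x : gain k x -> l x k. Proof. by case/andP. Qed.

Lemma state_par_gain k x : gain k x -> ~~ l (par x) k. Proof. by case/andP=> /andP[]. Qed.

Lemma state_loss k x : loss k x -> ~~ l x k. Proof. by case/andP. Qed.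

Lemma state_par_loss k x : loss k x -> l (par x) k. Proof. by case/andP=> /andP[]. Qed.

Lemma change_on_path k x n : l (iter n par x) k != l x k ->
  exists i, [/\ i < n, changes k (iter i par x) & l (iter i par x) k = l x k].
Proof.
elim: n => [|n IH]; first by rewrite eqxx.
have [same|diff] := eqVneq (l (iter n par x) k) (l x k); last first.
  by move=> _; have [i [lt_in ch eq_i]] := IH diff; exists i; split=> //; exact: ltnW.
rewrite iterS => ne; exists n; split=> //; rewrite /changes same ne andbT.
by apply: contraNneq ne => n_root; rewrite n_root par_root -n_root same.
Qed.

Lemma state_iter_par x n :
  (forall i k, i < n -> ~~ changes k (iter i par x)) -> l (iter n par x) = l x.
Proof.
move=> still; apply/ffunP=> k; apply/eqP; apply: contraT => /change_on_path.
by case=> i [lt_in ch _]; move: (still i k lt_in); rewrite ch.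
Qed.

Lemma loss_between k g x : gain k g -> anc g x -> ~~ l x k ->
  exists e, [/\ loss k e, anc g e & anc e x].
Proof.
move=> gg [n xg] Nlx.
have [|i [lt_in ch same]] := @change_on_path k x n.
  by rewrite xg (state_gain gg) (negbTE Nlx).
exists (iter i par x); split; last exact: anc_iter.
  by rewrite changes_loss // same.
by rewrite -xg; apply: anc_iter_leq; exact: ltnW.
Qed.

Lemma state_below_gain k g x : gain k g -> anc g x ->
  (forall e, loss k e -> ~ anc e x) -> l x k.
Proof.
move=> gg gx no_loss; apply: contraT => /(loss_between gg gx)[e [le _ ex]].
by case: (no_loss e le ex).
Qed.

Hypothesis root_state : forall k, l r k = false.
Hypothesis gain_before_loss : forall k x y,
  changes k x -> changes k y -> x != y ->
  (gain k x /\ loss k y /\ sanc x y) \/ (gain k y /\ loss k x /\ sanc y x).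

Lemma gain_uniq k x y : gain k x -> gain k y -> x = y.
Proof.
move=> gx gy; apply/eqP; apply: contraT => neq_xy.
have chx : changes k x by rewrite changesE gx.
have chy : changes k y by rewrite changesE gy.
case: (gain_before_loss chx chy neq_xy) => [[_ [ly _]]|[_ [lx _]]].
  by move: (gainNloss gy); rewrite ly.
by move: (gainNloss gx); rewrite lx.
Qed.

Lemma loss_uniq k x y : loss k x -> loss k y -> x = y.
Proof.
move=> lx ly; apply/eqP; apply: contraT => neq_xy.
have chx : changes k x by rewrite changesE lx orbT.
have chy : changes k y by rewrite changesE ly orbT.
case: (gain_before_loss chx chy neq_xy) => [[gx _]|[gy _]].
  by move: (gainNloss gx); rewrite lx.
by move: (gainNloss gy); rewrite ly.
Qed.

Lemma sanc_gain_loss k g e : gain k g -> loss k e -> sanc g e.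
Proof.
move=> gg le; have [eq_ge|neq_ge] := eqVneq g e.
  by move: (gainNloss gg); rewrite eq_ge le.
have chg : changes k g by rewrite changesE gg.
have che : changes k e by rewrite changesE le orbT.
case: (gain_before_loss chg che neq_ge) => [[_ [_ //]]|[ge _]].
by move: (gainNloss ge); rewrite le.
Qed.

Lemma gain_above k x : l x k -> exists2 g, gain k g & anc g x.
Proof.
move=> lx; have [n xr] := anc_root x.
have [|i [_ ch same]] := @change_on_path k x n; first by rewrite xr root_state lx.
by exists (iter i par x); [rewrite changes_gain // same | exact: anc_iter].
Qed.

Lemma gain_anc k g x : gain k g -> l x k -> anc g x.
Proof. by move=> gg /gain_above[g' gg' g'x]; rewrite (gain_uniq gg gg'). Qed.

(* Going up from x, the first change of k is a gain strictly below e, while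
   the gain of k lies above its loss. *)
Lemma loss_not_above k x e : l x k -> loss k e -> ~ anc e x.
Proof.
move=> lx le [m xe].
have [|i [lt_im ch same]] := @change_on_path k x m.
  by rewrite xe (negbTE (state_loss le)) lx.
have gi : gain k (iter i par x) by rewrite changes_gain // same.
have ei : anc e (iter i par x) by rewrite -xe; apply: anc_iter_leq; exact: ltnW.
have eq_ie := anc_antisym (sanc_anc (sanc_gain_loss gi le)) ei.
by move: (gainNloss gi); rewrite eq_ie le.
Qed.

Section MaximalReducible.
Variables (S : finType) (G : rbgraph S C).
Local Notation M := (assoc_matrix G).
Hypothesis rows_realized : forall s, exists x, forall k, l x k = M s k.
Hypothesis standingG : standing G.
Hypothesis inactive : forall k, ~~ rb_active G k.
Hypothesis maximal : forall k, maximal_char G k.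
Hypothesis connected : rb_connected G.

Lemma assoc_matrix_edge s k : M s k = rb_edge G s k.
Proof. by rewrite /assoc_matrix (negbTE (inactive k)). Qed.

Lemma Sof_subset_eq k d : Sof G k \subset Sof G d -> k = d.
Proof.
case: standingG => _ [_ [_ [_ distinct]]] sub.
have [_ /(_ d (inactive d))] := maximal k; rewrite properE sub /= negbK => sup.
have /setP eqS : Sof G k = Sof G d by apply/eqP; rewrite eqEsubset sub sup.
by apply: distinct => s; move: (eqS s); rewrite !inE.
Qed.

Lemma gain_subtree_eq k d gk : gain k gk ->
  (forall x, anc gk x -> l x k -> l x d) -> k = d.
Proof.
move=> gkk below; apply: Sof_subset_eq; apply/subsetP => s; rewrite !inE.
have [x xs] := rows_realized s; rewrite -!xs => lxk.
exact: below (gain_anc gkk lxk) lxk.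
Qed.

(* Otherwise every node below c^+ carries k, so S(c) is contained in S(k) and
   maximality of c gives c = k. *)
Lemma loss_below_gain c g k :
  gain c g -> l (par g) k -> exists2 e, loss k e & anc g e.
Proof.
move=> gc pgk; apply: NNPP => no_loss.
have [gk gkk gk_pg] := gain_above pgk.
suff eq_ck : c = k by move: pgk; rewrite -eq_ck (negbTE (state_par_gain gc)).
apply: (gain_subtree_eq gc) => x gx _.
apply: state_below_gain gkk (anc_trans gk_pg (anc_trans (anc_par g) gx)) _ => e le ex.
have [eg|ge] := anc_total ex gx; last by apply: no_loss; exists e.
have [_ e_pg] : sanc e g.
  by apply: anc_sanc eg _ => ge; apply: no_loss; exists e.
exact: loss_not_above pgk le e_pg.
Qed.

Definition species_below g s := exists2 x, anc g x & forall k, l x k = M s k.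

Lemma edge_leaving_subtree c g s0 : gain c g -> ~ species_below g s0 ->
  exists so si d, [/\ ~ species_below g so, species_below g si, M so d & M si d].
Proof.
move=> gc s0_out.
pose P (v : S + C) := match v with
  | inl s => species_below g s
  | inr k => exists2 s, species_below g s & M s k end.
have Pc : P (inr c).
  have [_ [/(_ c) [s sc] _]] := standingG; have [x xs] := rows_realized s.
  exists s; last by rewrite assoc_matrix_edge.
  by exists x => //; apply: gain_anc gc _; rewrite xs assoc_matrix_edge.
have [[so|k] [[si|d] [/= adj Nso Pd]]] :=
  connect_crossing (connected (inl s0) (inr c)) s0_out Pc => //.
- by have [si ? ?] := Pd; exists so, si, d; rewrite assoc_matrix_edge.
- by case: Nso; exists si => //; rewrite assoc_matrix_edge.
Qed.

Section OffSubtree.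
Variables (c d : C) (g x y : V).
Hypotheses (gc : gain c g) (gx : anc g x) (xd : l x d) (yd : l y d) (y_off : ~ anc g y).

Lemma gain_off_subtree_above gd : gain d gd -> sanc gd g.
Proof.
move=> gdd; have gdy := gain_anc gdd yd.
have [gd_g|g_gd] := anc_total (gain_anc gdd xd) gx.
  by apply: (anc_sanc gd_g) => g_gd; apply: y_off; exact: anc_trans g_gd gdy.
by case: y_off; exact: anc_trans g_gd gdy.
Qed.

Lemma loss_off_subtree_below : exists2 e, loss d e & anc g e.
Proof.
apply: loss_below_gain gc _; have [gd gdd _] := gain_above yd.
have [_ gd_pg] := gain_off_subtree_above gdd.
apply: state_below_gain gdd gd_pg _ => e le e_pg.
exact: loss_not_above xd le (anc_trans e_pg (anc_trans (anc_par g) gx)).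
Qed.

(* Below z every node carrying k carries d, since the loss of d lies below g;
   maximality of k then gives k = d, whose gain lies above g. *)
Lemma no_gain_off_subtree k z : anc z y -> ~ anc z g -> ~ gain k z.
Proof.
move=> zy Nzg gz; have [gd gdd gdy] := gain_above yd.
have gdg := sanc_anc (gain_off_subtree_above gdd).
have gdz : anc gd z.
  by have [//|z_gd] := anc_total gdy zy; case: Nzg; exact: anc_trans gdg.
have [ld ldd g_ld] := loss_off_subtree_below.
suff eq_kd : k = d.
  by rewrite eq_kd in gz; apply: Nzg; rewrite (gain_uniq gz gdd).
apply: (gain_subtree_eq gz) => w zw _.
apply: state_below_gain gdd (anc_trans gdz zw) _ => e le ew.
rewrite (loss_uniq le ldd) in ew.
have [ld_z|z_ld] := anc_total ew zw.
  exact: loss_not_above yd ldd (anc_trans ld_z zy).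
have [//|g_z] := anc_total z_ld g_ld.
exact: y_off (anc_trans g_z zy).
Qed.

(* The gain of k would lie above g, so par g would carry k, and the loss of k
   would lie below g by maximality of c. *)
Lemma no_loss_off_subtree k z : anc z y -> ~ anc z g -> ~ loss k z.
Proof.
move=> zy Nzg lz; have [gk gkk gk_pz] := gain_above (state_par_loss lz).
have gkz := anc_trans gk_pz (anc_par z).
have gkg : anc gk g.
  by apply: NNPP => Ngkg; exact: no_gain_off_subtree (anc_trans gkz zy) Ngkg gkk.
have [_ gk_pg] : sanc gk g.
  apply: (anc_sanc gkg) => g_gk.
  by apply: y_off; exact: anc_trans g_gk (anc_trans gkz zy).
have pgk : l (par g) k.
  apply: state_below_gain gkk gk_pg _ => e le e_pg; rewrite (loss_uniq le lz) in e_pg.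
  by apply: Nzg; exact: anc_trans e_pg (anc_par g).
have [e le ge] := loss_below_gain gc pgk; rewrite (loss_uniq le lz) in ge.
exact: y_off (anc_trans ge zy).
Qed.

Lemma species_lca : exists w, [/\ anc w g, w <> g & l w = l y].
Proof.
have [|n [wg below]] := @ex_minn_classic (fun n => anc (iter n par y) g).
  by have [N yN] := anc_root y; exists N; rewrite yN; exact: anc_root.
exists (iter n par y); split=> //.
  by move=> eq_wg; apply: y_off; rewrite -eq_wg; exact: anc_iter.
apply: state_iter_par => i k /below Nzg; rewrite changesE; apply/norP.
split; apply/negP; [exact: no_gain_off_subtree (anc_iter i y) Nzg
                   | exact: no_loss_off_subtree (anc_iter i y) Nzg].
Qed.

End OffSubtree.

Lemma species_above_gain c g s0 : gain c g -> ~ species_below g s0 ->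
  exists w, is_species l M w /\ sanc w g.
Proof.
move=> gc s0_out.
have [so [si [d [so_out [x gx xsi] so_d si_d]]]] := edge_leaving_subtree gc s0_out.
have [y yso] := rows_realized so.
have y_off : ~ anc g y by move=> gy; apply: so_out; exists y.
have xd : l x d by rewrite xsi.
have yd : l y d by rewrite yso.
have [w [wg w_ng lwy]] := species_lca gc gx xd yd y_off.
exists w; split; last exact/sancE.
by exists so => k; rewrite lwy yso.
Qed.

Definition nested_gains_losses c c' : Prop :=
  (exists x1 x2 x3,
     [/\ gain c x1, gain c' x2, loss c x3, sanc x1 x2 & sanc x2 x3] /\
     ((forall y, ~~ loss c' y) \/ exists x4, loss c' x4 /\ sanc x3 x4)).

Definition separated_losses c c' : Prop :=
  (exists x3 x4, [/\ loss c x3, loss c' x4, ~ anc x3 x4 & ~ anc x4 x3]) /\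
  (conflicting G c c' ->
     exists z, is_species l M z /\
       forall x1 x2, gain c x1 -> gain c' x2 -> sanc z x1 /\ sanc z x2).

Lemma separated_losses_sym c c' : separated_losses c c' -> separated_losses c' c.
Proof.
case=> [[e [f [le lf ef fe]]] above]; split; first by exists f, e.
move=> conf; have [|z [zs z_above]] := above.
  by move=> b b'; have [s [? ?]] := conf b' b; exists s.
by exists z; split=> // x1 x2 g1 g2; have [? ?] := z_above x2 x1 g2 g1.
Qed.

Lemma overlapping_nodes c c' : overlapping G c c' ->
  exists x11 x10 x01,
    [/\ l x11 c && l x11 c', l x10 c && ~~ l x10 c' & ~~ l x01 c && l x01 c'].
Proof.
case=> /set0Pn[s11 s11_in] [/subsetPn[s10 s10c s10c'] /subsetPn[s01 s01c' s01c]].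
have [x11 x11s] := rows_realized s11; have [x10 x10s] := rows_realized s10.
have [x01 x01s] := rows_realized s01; exists x11, x10, x01.
rewrite !x11s !x10s !x01s; move: s11_in s10c s10c' s01c s01c'.
by rewrite !inE => -> -> -> -> ->.
Qed.

(* A node below c^+ carrying neither character lies below both losses. *)
Lemma species_above_separated_gains c c' g g' e f :
  gain c g -> gain c' g' -> anc g g' -> anc g' e -> loss c e -> loss c' f ->
  ~ anc e f -> ~ anc f e -> conflicting G c c' ->
  exists z, is_species l M z /\
    forall x1 x2, gain c x1 -> gain c' x2 -> sanc z x1 /\ sanc z x2.
Proof.
move=> gc gc' gg' g'e le lf Nef Nfe conf; have [s00 [s00c s00c']] := conf false false.
have s00_out : ~ species_below g s00.
  case=> x gx xs; have Nxc : ~~ l x c by rewrite xs s00c.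
  have Nxc' : ~~ l x c' by rewrite xs s00c'.
  have [e' [le' _ e'x]] := loss_between gc gx Nxc; rewrite (loss_uniq le' le) in e'x.
  have [f' [lf' _ f'x]] := loss_between gc' (anc_trans g'e e'x) Nxc'.
  rewrite (loss_uniq lf' lf) in f'x.
  by case: (anc_total e'x f'x).
have [w [ws wg]] := species_above_gain gc s00_out.
exists w; split=> // x1 x2 g1 g2.
by rewrite -(gain_uniq gc g1) -(gain_uniq gc' g2); split=> //; exact: sanc_anc_trans gg'.
Qed.

Lemma overlapping_cases_anc_gains c c' g g' : overlapping G c c' ->
  gain c g -> gain c' g' -> anc g g' ->
  nested_gains_losses c c' \/ separated_losses c c'.
Proof.
move=> ov gc gc' gg'.
have [x11 [x10 [x01 [/andP[x11c x11c'] /andP[x10c Nx10c'] /andP[Nx01c x01c']]]]] :=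
  overlapping_nodes ov.
have g'x01 := gain_anc gc' x01c'.
have [e [le g'e ex01]] : exists e, [/\ loss c e, sanc g' e & anc e x01].
  have [e [le _ ex01]] := loss_between gc (anc_trans gg' g'x01) Nx01c.
  have Neg' : ~ anc e g'.
    by move=> eg'; apply: loss_not_above x11c le (anc_trans eg' (gain_anc gc' x11c')).
  exists e; split=> //; apply: (anc_sanc _ Neg').
  by have [//|/Neg'] := anc_total g'x01 ex01.
have equal_gains : g = g' -> exists2 f, loss c' f & anc f x10.
  move=> eq_gg'; rewrite -eq_gg' in gc'.
  by have [f [lf _ fx10]] := loss_between gc' (gain_anc gc x10c) Nx10c'; exists f.
have [[f lf]|no_loss] := classic (exists f, loss c' f); last first.
  left; exists g, g', e; split; last first.
    by left=> f; apply/negP => lf; apply: no_loss; exists f.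
  split=> //; apply/sancE; split=> // eq_gg'.
  by have [f lf _] := equal_gains eq_gg'; apply: no_loss; exists f.
have Nfe : ~ anc f e by move=> fe; exact: loss_not_above x01c' lf (anc_trans fe ex01).
have [ef|Nef] := classic (anc e f); last first.
  right; split; first by exists e, f.
  exact: species_above_separated_gains gc gc' gg' (sanc_anc g'e) le lf Nef Nfe.
left; exists g, g', e; split; last by right; exists f; split=> //; exact: anc_sanc.
split=> //; apply/sancE; split=> // eq_gg'.
have [f' lf' f'x10] := equal_gains eq_gg'; rewrite (loss_uniq lf' lf) in f'x10.
exact: loss_not_above x10c le (anc_trans ef f'x10).
Qed.

Lemma overlapping_cases c c' : overlapping G c c' ->
  nested_gains_losses c c' \/ nested_gains_losses c' c \/ separated_losses c c'.
Proof.
move=> ov; have [x [_ [_ [/andP[xc xc'] _ _]]]] := overlapping_nodes ov.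
have [g gc gx] := gain_above xc; have [g' gc' g'x] := gain_above xc'.
have [gg'|g'g] := anc_total gx g'x.
  by case: (overlapping_cases_anc_gains ov gc gc' gg') => ?; [left | right; right].
have [?|/separated_losses_sym ?] :=
  overlapping_cases_anc_gains (overlapping_sym ov) gc' gc g'g.
  by right; left.
by right; right.
Qed.

End MaximalReducible.
End Phylogeny.
End Ancestry.

Theorem lemma4 (S C V : finType) (G : rbgraph S C)
  (r : V) (par : V -> V) (l : V -> {ffun C -> bool}) (c c' : C) :
  standing G ->
  maximal_reducible G ->
  solves G r par l ->
  overlapping G c c' ->
  occurs r par l c -> occurs r par l c' ->
  ~~ rb_active G c -> ~~ rb_active G c' ->
  (* (1) c+, c'+, c-, c'- in this order on a root-to-leaf path, c'- possibly missing *)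
  (exists x1 x2 x3,
     [/\ gain r par l c x1, gain r par l c' x2, loss r par l c x3,
         sanc r par x1 x2 & sanc r par x2 x3] /\
     ((forall y, ~~ loss r par l c' y) \/
      exists x4, loss r par l c' x4 /\ sanc r par x3 x4))
  \/
  (* (2) c'+, c+, c'-, c- in this order on a root-to-leaf path, c- possibly missing *)
  (exists x1 x2 x3,
     [/\ gain r par l c' x1, gain r par l c x2, loss r par l c' x3,
         sanc r par x1 x2 & sanc r par x2 x3] /\
     ((forall y, ~~ loss r par l c y) \/
      exists x4, loss r par l c x4 /\ sanc r par x3 x4))
  \/
  (* (3) c- and c'- on two distinct paths; if conflicting, a species precedes c+ and c'+ *)
  ((exists x3 x4, [/\ loss r par l c x3, loss r par l c' x4,
                     ~ anc par x3 x4 & ~ anc par x4 x3]) /\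
   (conflicting G c c' ->
      exists z, is_species l (assoc_matrix G) z /\
        forall x1 x2, gain r par l c x1 -> gain r par l c' x2 ->
          sanc r par z x1 /\ sanc r par z x2)).
Proof.
move=> standingG [[connected _] [inactive maximal]] [tree [root [_ [order rows]]]].
(* The occurrence and inactivity of c and c' are implied by the other hypotheses. *)
move=> ov _ _ _ _.
have root_state k : l r k = false by rewrite root inE (negbTE (inactive k)).
exact: (overlapping_cases tree root_state order rows
          standingG inactive maximal connected ov).
Qed.
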